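(* Let $c\in\mathbb{R}^{m\times n}$ be a matrix (entries may be of any sign) such that $c_i([n])=C$ for all $i\in[m]$, for some real $C$. Let $A$ be an allocation that minimizes $\max_{i\in[m]}c_i(A_i)$ among all allocations and, subject to this, minimizes $\sum_{i\in[m]}c_i(A_i)$. Then $\sum_{i\in[m]}c_i(A_i)\le\frac1m\sum_{i\in[m]}c_i([n])$.
   Context: Notation: $[k]=\{1,\dots,k\}$; for $S\subseteq[n]$, $c_i(S)=\sum_{j\in S}c_{i,j}$. An allocation is a tuple $(A_1,\dots,A_m)$ of pairwise disjoint subsets of $[n]$ whose union is $[n]$. *)

From HB Require Import structures.
From mathcomp Require Import all_boot all_order all_algebra.
Set Implicit Arguments. Unset Strict Implicit. Unset Printing Implicit Defensive.
Import Order.TTheory GRing.Theory Num.Theory.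
Local Open Scope ring_scope.

Definition cost {R : numDomainType} {m n : nat} (c : 'M[R]_(m, n))
  (i : 'I_m) (S : {set 'I_n}) : R := \sum_(j in S) c i j.

Definition allocation {m n : nat} (A : 'I_m -> {set 'I_n}) : Prop :=
  (forall i k : 'I_m, i != k -> [disjoint A i & A k]) /\
  \bigcup_(i < m) A i = [set: 'I_n].

(* max_{i in [m]} c_i(A_i): the maximum of the (finite) list of bundle costs
   (the default value is one of the listed costs, so it is the true maximum
   whenever m > 0). *)
Definition maxcost {R : realDomainType} {m n : nat} (c : 'M[R]_(m, n))
  (A : 'I_m -> {set 'I_n}) : R :=
  let vals := [seq cost c i (A i) | i <- enum 'I_m] in
  \big[Num.max/head 0 vals]_(x <- vals) x.

Definition sumcost {R : numDomainType} {m n : nat} (c : 'M[R]_(m, n))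
  (A : 'I_m -> {set 'I_n}) : R := \sum_(i < m) cost c i (A i).

(* If the bundle costs sum to more than C, then every agent i values some bundle A_l
   strictly less than its owner l does (otherwise c_i([n]) = sum_l c_i(A_l) would be at
   least sum_l c_l(A_l)).  Choosing such an l for every agent defines a map on agents;
   along one of its cycles each agent takes the bundle it envies.  This keeps every
   bundle cost below the old cost of that bundle, so the maximum does not grow, while
   the total cost strictly drops, contradicting the choice of A. *)

From HB Require Import structures.
From mathcomp Require Import all_boot all_order all_algebra all_fingroup.

Set Implicit Arguments.
Unset Strict Implicit.
Unset Printing Implicit Defensive.

Import Order.TTheory GRing.Theory Num.Theory.
Local Open Scope ring_scope.

Lemma fcycle_point_exists (T : finType) (f : T -> T) (x0 : T) :
  exists x, fconnect f (f x) x.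
Proof.
have /trajectP [k lt_k Ek] := looping_order f x0.
exists (iter k f x0); set y := iter k f x0 in Ek *.
have Ey : y = iter (fingraph.order f x0 - k) f y by rewrite /y -iterD subnK ?(ltnW lt_k).
have pos : (0 < fingraph.order f x0 - k)%N by rewrite subn_gt0.
by rewrite [X in fconnect f _ X]Ey -(prednK pos) iterSr fconnect_iter.
Qed.

Lemma fcycle_perm_exists (T : finType) (f : T -> T) (x : T) :
  fconnect f (f x) x ->
  exists s : {perm T}, s x = f x /\ forall y, s y = f y \/ s y = y.
Proof.
rewrite fconnect_f => cyc_x.
pose g y := if y \in fingraph.orbit f x then f y else y.
have g_inj : injective g.
  move=> y1 y2; rewrite /g; case: ifP => o1; case: ifP => o2.
  - by move=> E; rewrite -(finv_f_cycle cyc_x o1) E (finv_f_cycle cyc_x o2).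
  - by move=> E; rewrite -E fingraph.mem_orbit in o2.
  - by move=> E; rewrite E fingraph.mem_orbit in o1.
  - by [].
exists (perm g_inj); split=> [|y]; rewrite permE /g ?fingraph.in_orbit //.
by case: ifP; [left | right].
Qed.

Section Allocations.
Variables (R : realDomainType) (m n : nat) (c : 'M[R]_(m, n)).
Implicit Types (A : 'I_m -> {set 'I_n}) (s : {perm 'I_m}).

Lemma cost_le_maxcost A i : cost c i (A i) <= maxcost c A.
Proof. by apply: (le_bigmax_seq _ _ xpredT id) => //; apply: map_f; rewrite mem_enum. Qed.

Lemma maxcost_le A b :
  (0 < m)%N -> (forall i, cost c i (A i) <= b) -> maxcost c A <= b.
Proof.
move=> m_gt0 le_b; rewrite /maxcost big_seq_cond.
apply: bigmax_le => [|_ /andP [/mapP [i _ ->] _] //].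
by case: m c A le_b m_gt0 => // m' c' A' le_b _; rewrite enum_ordSl; apply: le_b.
Qed.

Lemma allocation_perm A s : allocation A -> allocation (A \o s).
Proof.
case=> disjA coverA; split=> [i k ne_ik | ].
  by apply: disjA; rewrite (inj_eq perm_inj).
by rewrite -coverA [RHS](reindex_inj (@perm_inj _ s)).
Qed.

Lemma cost_setT_allocation A i :
  allocation A -> cost c i [set: 'I_n] = \sum_(l < m) cost c i (A l).
Proof.
by case=> disjA coverA; rewrite /cost -coverA (partition_disjoint_bigcup _ _ disjA).
Qed.

Lemma envied_bundle_exists A i :
  allocation A -> cost c i [set: 'I_n] < sumcost c A ->
  exists l, cost c i (A l) < cost c l (A l).
Proof.
move=> allocA; rewrite (cost_setT_allocation i allocA) => lt_sum.
apply/existsP; apply: contraTT lt_sum; rewrite negb_exists -leNgt => /forallP no_envy.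
by apply: ler_sum => l _; rewrite leNgt no_envy.
Qed.

Lemma sumcost_perm_lt A s x :
  (forall i, cost c i (A (s i)) <= cost c (s i) (A (s i))) ->
  cost c x (A (s x)) < cost c (s x) (A (s x)) ->
  sumcost c (A \o s) < sumcost c A.
Proof.
move=> le_s lt_x.
rewrite /sumcost [X in _ < X](reindex_inj (@perm_inj _ s)) /=.
rewrite (bigD1 x) //= [X in _ < X](bigD1 x) //=.
by apply: ltr_leD => //; apply: ler_sum.
Qed.

End Allocations.

Theorem mainTheorem5 (R : realFieldType) (m n : nat) (c : 'M[R]_(m, n)) (C : R)
  (hC : forall i : 'I_m, cost c i [set: 'I_n] = C)
  (A : 'I_m -> {set 'I_n}) (hA : allocation A)
  (hmax : forall B : 'I_m -> {set 'I_n}, allocation B -> maxcost c A <= maxcost c B)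
  (hsum : forall B : 'I_m -> {set 'I_n}, allocation B ->
            maxcost c B = maxcost c A -> sumcost c A <= sumcost c B) :
  sumcost c A <= (m%:R)^-1 * \sum_(i < m) cost c i [set: 'I_n].
Proof.
have [m0 | m_gt0] := posnP m; first by subst m; rewrite /sumcost !big_ord0 mulr0.
have -> : (m%:R)^-1 * \sum_(i < m) cost c i [set: 'I_n] = C.
  rewrite (eq_bigr _ (fun i _ => hC i)) sumr_const card_ord -[C *+ m]mulr_natr mulrCA.
  by rewrite mulVf ?mulr1 // pnatr_eq0 -lt0n.
rewrite leNgt; apply/negP => lt_C.
have /fin_all_exists [f envy] : forall i, exists l, cost c i (A l) < cost c l (A l).
  by move=> i; apply: envied_bundle_exists; rewrite ?hC.
have [x cyc_x] := fcycle_point_exists f (Ordinal m_gt0).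
have [s [sx_f s_f_or_id]] := fcycle_perm_exists cyc_x.
have le_s i : cost c i (A (s i)) <= cost c (s i) (A (s i)).
  by case: (s_f_or_id i) => ->; rewrite ?lexx // ltW.
have allocB := allocation_perm s hA.
have maxB : maxcost c (A \o s) = maxcost c A.
  apply/eqP; rewrite eq_le hmax // andbT; apply: maxcost_le => // i.
  exact: le_trans (le_s i) (cost_le_maxcost _ _ _).
have lt_x : cost c x (A (s x)) < cost c (s x) (A (s x)) by rewrite sx_f envy.
by have := sumcost_perm_lt le_s lt_x; rewrite ltNge hsum.
Qed.
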